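(* If $\mathbf{H}=(H,\le,\wedge,\vee,0,1,\to)$ is a Heyting algebra, then its canonical frame $(X,\perp,Y,T)$ is a Heyting frame.
   Context: The canonical frame of $\mathbf H$: $X$ is the set of filters of $\mathbf H$, $Y$ the set of ideals, $x\perp y$ iff $x\cap y\neq\emptyset$; for $x\in X,v\in Y$, $x\leadsto v$ is the ideal generated by $\{a\to b:a\in x,b\in v\}$, and $yTxv$ iff $x\leadsto v\subseteq y$. General notions: $U'=\{y:\forall x\in U\ x\perp y\}$ for $U\subseteq X$, ${}'V=\{x:\forall y\in V\ x\perp y\}$ for $V\subseteq Y$; $A\subseteq X$ is stable if $A={}'(A')$, $B\subseteq Y$ co-stable if $B=({}'B)'$. Preorders: $x\le z$ iff $\{x\}'\subseteq\{z\}'$; $y\le v$ iff ${}'\{y\}\subseteq{}'\{v\}$; separated means both are partial orders; $\Gamma u$ is the set of elements above $u$. $T'\subseteq X\times X\times Y$: $uT'xv$ iff $\forall y(yTxv\Rightarrow u\perp y)$. An implicative frame is $(X,\perp,Y,T)$ with: (F0) $x\perp y$ iff $uT'xy$ for all $u\in X$; (F1) separated; (F2) each $\{y:yTxv\}$ equals $\Gamma w$ for some $w\in Y$; (F3) if $yTxv$, $x_1\le x$, $v_1\le v$ then $yTx_1v_1$; (F4) for all $u,x\in X,v\in Y$, $\{x_1:uT'x_1v\}$ is stable and $\{v_1:uT'xv_1\}$ is co-stable. Derived relations: $vR^{\partial11}zx$ iff $xT'zv$; $uR^{111}zx$ iff $\forall v\in Y(vR^{\partial11}zx\Rightarrow u\perp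 v)$. Upper bound relation: $uR_\le xz$ iff $x\le u$ and $z\le u$. A Heyting frame is an implicative frame with $\{u:uR^{111}xz\}=\{u:uR_\le xz\}$ for all $x,z\in X$. *)

From mathcomp Require Import all_boot all_order.
Set Implicit Arguments. Unset Strict Implicit. Unset Printing Implicit Defensive.
Import Order.TTheory.
Local Open Scope order_scope.

Definition heyting_imp d (L : tbLatticeType d) (imp : L -> L -> L) : Prop :=
  forall a b c : L, (a `&` b <= c) = (a <= imp b c).

(** * Generic frame notions, for (X, perp, Y, T) with [T y x v] meaning yTxv. *)
Section Frames.
Variables (X Y : Type) (perp : X -> Y -> Prop) (T : Y -> X -> Y -> Prop).

Definition primeX (U : X -> Prop) : Y -> Prop := fun y => forall x, U x -> perp x y.
Definition primeY (V : Y -> Prop) : X -> Prop := fun x => forall y, V y -> perp x y.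

Definition stable (A : X -> Prop) : Prop := forall x, A x <-> primeY (primeX A) x.
Definition costable (B : Y -> Prop) : Prop := forall y, B y <-> primeX (primeY B) y.

Definition leX (x z : X) : Prop := forall y, perp x y -> perp z y.
Definition leY (y v : Y) : Prop := forall x, perp x y -> perp x v.

Definition separated : Prop :=
  (forall x z, leX x z -> leX z x -> x = z) /\
  (forall y v, leY y v -> leY v y -> y = v).

Definition GammaY (w : Y) : Y -> Prop := fun y => leY w y.

Definition Tprime (u x : X) (v : Y) : Prop := forall y, T y x v -> perp u y.

Definition implicative_frame : Prop :=
  (forall x y, perp x y <-> (forall u, Tprime u x y)) /\
  separated /\
  (forall x v, exists w, forall y, T y x v <-> GammaY w y) /\
  (forall y x v x1 v1, T y x v -> leX x1 x -> leY v1 v -> T y x1 v1) /\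
  (forall u x v, stable (fun x1 => Tprime u x1 v) /\
                          costable (fun v1 => Tprime u x v1)).

Definition Rd11 (v : Y) (z x : X) : Prop := Tprime x z v.
Definition R111 (u z x : X) : Prop := forall v, Rd11 v z x -> perp u v.
Definition Rle (u x z : X) : Prop := leX x u /\ leX z u.

Definition heyting_frame : Prop :=
  implicative_frame /\ (forall x z u, R111 u x z <-> Rle u x z).
End Frames.

Section Canonical.
Variables (d : Order.disp_t) (L : tbLatticeType d) (imp : L -> L -> L).

Definition is_filter (x : L -> Prop) : Prop :=
  x \top /\ (forall a b, x a -> a <= b -> x b) /\ (forall a b, x a -> x b -> x (a `&` b)).
Definition is_ideal (y : L -> Prop) : Prop :=
  y \bot /\ (forall a b, y b -> a <= b -> y a) /\ (forall a b, y a -> y b -> y (a `|` b)).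

Definition filters := {x : L -> Prop | is_filter x}.
Definition ideals := {y : L -> Prop | is_ideal y}.

Definition cperp (x : filters) (y : ideals) : Prop :=
  exists a, proj1_sig x a /\ proj1_sig y a.

Definition gen_ideal (S : L -> Prop) : L -> Prop :=
  fun a => forall I, is_ideal I -> (forall b, S b -> I b) -> I a.

Definition leadsto (x : filters) (v : ideals) : L -> Prop :=
  gen_ideal (fun c => exists a b, proj1_sig x a /\ proj1_sig v b /\ c = imp a b).

Definition cT (y : ideals) (x : filters) (v : ideals) : Prop :=
  forall a, leadsto x v a -> proj1_sig y a.
End Canonical.

From mathcomp Require Import all_boot all_order.
From Stdlib Require Import FunctionalExtensionality PropExtensionality ProofIrrelevance.
Set Implicit Arguments. Unset Strict Implicit. Unset Printing Implicit Defensive.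
Import Order.TTheory.
Local Open Scope order_scope.

(* In the canonical frame the preorders on filters and on ideals are inclusion
   (test against principal ideals and filters), which gives separation.  In a
   Heyting algebra the ideal generated by the a -> b (a in x, b in v) is just
   their down-set, so T' u x v holds iff c /\ a <= b for some c in u, a in x,
   b in v.  By residuation this says both that the filter join of u and x
   meets v and that x meets the ideal generated by the c -> b (c in u, b in v).
   Hence the sets of (F4) are of the form {x}' and '{y}, so (co)stable, and
   R^111 u x z says that the filter join of z and x lies in u, i.e. that both
   x and z do. *)

Section FrameFacts.
Variables (X Y : Type) (perp : X -> Y -> Prop) (T : Y -> X -> Y -> Prop).

Lemma stable_perp_r (A : X -> Prop) (y : Y) :
  (forall x, A x <-> perp x y) -> stable perp A.
Proof.
move=> Ay x; split=> [Ax y' Ay'|Ax]; first exact: Ay'.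
by apply/Ay/Ax => x' /Ay.
Qed.

Lemma costable_perp_l (B : Y -> Prop) (x : X) :
  (forall y, B y <-> perp x y) -> costable perp B.
Proof.
move=> Bx y; split=> [By x' Bx'|By]; first exact: Bx'.
by apply/Bx/By => y' /Bx.
Qed.

Lemma Tprime_GammaY (u x : X) (v w : Y) :
  (forall y, T y x v <-> GammaY perp w y) -> Tprime perp T u x v <-> perp u w.
Proof.
move=> Tw; split=> [uT|uw y /Tw wy]; last exact: wy.
by apply: uT; apply/Tw => x'.
Qed.

End FrameFacts.

Local Notation "a ∈ x" := (proj1_sig x a) (at level 70, no associativity).

Section CanonicalFrame.
Variables (d : Order.disp_t) (L : tbLatticeType d).
Implicit Types (a b c : L) (x z u : filters L) (y v : ideals L).

Lemma filter1 x : \top ∈ x. Proof. by case: x => ? []. Qed.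

Lemma filter_ge x a b : a ∈ x -> a <= b -> b ∈ x.
Proof. by case: x => ? [_ [up _]] /=; apply: up. Qed.

Lemma filterI x a b : a ∈ x -> b ∈ x -> a `&` b ∈ x.
Proof. by case: x => ? [_ [_ meet]] /=; apply: meet. Qed.

Lemma ideal0 y : \bot ∈ y. Proof. by case: y => ? []. Qed.

Lemma ideal_le y a b : b ∈ y -> a <= b -> a ∈ y.
Proof. by case: y => ? [_ [down _]] /=; apply: down. Qed.

Lemma idealU y a b : a ∈ y -> b ∈ y -> a `|` b ∈ y.
Proof. by case: y => ? [_ [_ join]] /=; apply: join. Qed.

Lemma sig_pred_ext (P : (L -> Prop) -> Prop) (p q : {s | P s}) :
  (forall a, proj1_sig p a <-> proj1_sig q a) -> p = q.
Proof.
case: p q => [p Pp] [q Pq] /= pq; apply: subset_eq_compat.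
by apply: functional_extensionality => a; apply: propositional_extensionality.
Qed.

Lemma is_filter_principal a : is_filter (fun b => a <= b).
Proof.
split; [exact: lex1 | split=> [b c ab bc | b c ab ac]]; first exact: le_trans bc.
by rewrite lexI ab ac.
Qed.

Lemma is_ideal_principal a : is_ideal (fun b => b <= a).
Proof.
split; [exact: le0x | split=> [b c ca bc | b c ba ca]]; first exact: le_trans ca.
by rewrite leUx ba ca.
Qed.

Definition principal_filter a : filters L := exist _ _ (is_filter_principal a).
Definition principal_ideal a : ideals L := exist _ _ (is_ideal_principal a).

Lemma leX_canonicalE x z : leX (@cperp d L) x z <-> forall a, a ∈ x -> a ∈ z.
Proof.
split=> [xz a xa | xz y [a [xa ya]]]; last by exists a; split; [exact: xz|].
have [b [zb ba]] := xz (principal_ideal a) (ex_intro _ a (conj xa (lexx a))).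
exact: filter_ge zb ba.
Qed.

Lemma leY_canonicalE y v : leY (@cperp d L) y v <-> forall a, a ∈ y -> a ∈ v.
Proof.
split=> [yv a ya | yv x [a [xa ya]]]; last by exists a; split; [|exact: yv].
have [b [ab vb]] := yv (principal_filter a) (ex_intro _ a (conj (lexx a) ya)).
exact: ideal_le vb ab.
Qed.

Lemma separated_canonical : separated (@cperp d L).
Proof.
split=> [x z /leX_canonicalE xz /leX_canonicalE zx |
          y v /leY_canonicalE yv /leY_canonicalE vy].
  by apply: sig_pred_ext => a; split; [apply: xz | apply: zx].
by apply: sig_pred_ext => a; split; [apply: yv | apply: vy].
Qed.

Lemma is_filter_join x z :
  is_filter (fun b => exists c a, c ∈ x /\ a ∈ z /\ c `&` a <= b).
Proof.
split; [|split].
- by exists \top, \top; do !split; [exact: filter1 | exact: filter1 | exact: lex1].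
- move=> b b' [c [a [xc [za cab]]]] bb'.
  by exists c, a; do !split => //; exact: le_trans bb'.
- move=> b b' [c [a [xc [za cab]]]] [c' [a' [xc' [za' cab']]]].
  exists (c `&` c'), (a `&` a'); do !split; [exact: filterI | exact: filterI |].
  rewrite lexI; apply/andP; split.
  + by apply: le_trans cab; apply: leI2; exact: leIl.
  + by apply: le_trans cab'; apply: leI2; exact: leIr.
Qed.

Definition filter_join x z : filters L := exist _ _ (is_filter_join x z).

Lemma filter_join_subE x z u :
  (forall b, b ∈ filter_join x z -> b ∈ u) <->
  (forall a, a ∈ x -> a ∈ u) /\ (forall a, a ∈ z -> a ∈ u).
Proof.
split=> [xzu | [xu zu] b [c [a [xc [za cab]]]]].
  split=> a ha; apply: xzu.
  - by exists a, \top; do !split; [done | exact: filter1 | exact: leIl].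
  - by exists \top, a; do !split; [exact: filter1 | done | exact: leIr].
exact: filter_ge (filterI (xu c xc) (zu a za)) cab.
Qed.

Variables (imp : L -> L -> L) (Himp : heyting_imp imp).

Lemma le_imp a a' b b' : a' <= a -> b <= b' -> imp a b <= imp a' b'.
Proof.
move=> a'a bb'; rewrite -Himp.
have mp : imp a b `&` a <= b by rewrite Himp.
by apply: le_trans (le_trans mp bb'); exact: leI2.
Qed.

Lemma is_ideal_imp x v :
  is_ideal (fun c => exists a b, a ∈ x /\ b ∈ v /\ c <= imp a b).
Proof.
split; [|split].
- by exists \top, \bot; do !split; [exact: filter1 | exact: ideal0 | exact: le0x].
- move=> c c' [a [b [xa [vb c'ab]]]] cc'.
  by exists a, b; do !split => //; exact: le_trans c'ab.
- move=> c c' [a [b [xa [vb cab]]]] [a' [b' [xa' [vb' cab']]]].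
  exists (a `&` a'), (b `|` b'); do !split; [exact: filterI | exact: idealU |].
  rewrite leUx; apply/andP; split.
  + by apply: le_trans cab _; apply: le_imp; [exact: leIl | exact: leUl].
  + by apply: le_trans cab' _; apply: le_imp; [exact: leIr | exact: leUr].
Qed.

Definition imp_ideal x v : ideals L := exist _ _ (is_ideal_imp x v).

Lemma leadsto_imp_idealE x v c : leadsto imp x v c <-> c ∈ imp_ideal x v.
Proof.
split=> [gen | [a [b [xa [vb cab]]]] I HI HS].
  by apply: gen; [exact: is_ideal_imp | move=> _ [a [b [xa [vb ->]]]]; exists a, b].
by case: HI => _ [down _]; apply: down cab; apply: HS; exists a, b.
Qed.

Lemma cT_GammaY x v y : cT imp y x v <-> GammaY (@cperp d L) (imp_ideal x v) y.
Proof.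
rewrite /GammaY leY_canonicalE.
by split=> xv a /leadsto_imp_idealE; apply: xv.
Qed.

Lemma Tprime_canonicalE u x v :
  Tprime (@cperp d L) (cT imp) u x v <->
  exists c a b, c ∈ u /\ a ∈ x /\ b ∈ v /\ c `&` a <= b.
Proof.
rewrite (Tprime_GammaY u (cT_GammaY x v)).
split=> [[c [uc [a [b [xa [vb cab]]]]]] | [c [a [b [uc [xa [vb cab]]]]]]].
  by exists c, a, b; rewrite Himp.
by exists c; split=> //; exists a, b; rewrite -Himp.
Qed.

Lemma Tprime_perp_join u x v :
  Tprime (@cperp d L) (cT imp) u x v <-> cperp (filter_join u x) v.
Proof.
rewrite Tprime_canonicalE.
split=> [[c [a [b [uc [xa [vb cab]]]]]] | [b [[c [a [uc [xa cab]]]] vb]]].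
  by exists b; split=> //; exists c, a.
by exists c, a, b.
Qed.

Lemma Tprime_perp_imp u x v :
  Tprime (@cperp d L) (cT imp) u x v <-> cperp x (imp_ideal u v).
Proof.
rewrite Tprime_canonicalE.
split=> [[c [a [b [uc [xa [vb cab]]]]]] | [a [xa [c [b [uc [vb acb]]]]]]].
  by exists a; split=> //; exists c, b; rewrite -Himp meetC.
by exists c, a, b; rewrite meetC Himp.
Qed.

Lemma perp_Tprime_allE x y :
  cperp x y <-> forall u, Tprime (@cperp d L) (cT imp) u x y.
Proof.
split=> [[a [xa ya]] u | Tall].
  apply/Tprime_canonicalE; exists \top, a, a.
  by do !split=> //; [exact: filter1 | exact: leIr].
have /Tprime_canonicalE [c [a [b [topc [xa [yb cab]]]]]] := Tall (principal_filter \top).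
have ab : a <= b by apply: le_trans cab; rewrite lexI lexx andbT; exact: le_trans topc.
by exists b; split=> //; exact: filter_ge xa ab.
Qed.

Lemma cT_antitone y x v x1 v1 :
  cT imp y x v -> leX (@cperp d L) x1 x -> leY (@cperp d L) v1 v -> cT imp y x1 v1.
Proof.
move=> yxv /leX_canonicalE x1x /leY_canonicalE v1v c.
move=> /leadsto_imp_idealE [a [b [x1a [v1b cab]]]].
by apply/yxv/leadsto_imp_idealE; exists a, b; do !split; [exact: x1x | exact: v1v |].
Qed.

Lemma canonical_implicative_frame : implicative_frame (@cperp d L) (cT imp).
Proof.
split; first exact: perp_Tprime_allE.
split; first exact: separated_canonical.
split; first by move=> x v; exists (imp_ideal x v) => y; exact: cT_GammaY.
split; first exact: cT_antitone.
move=> u x v; split.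
  exact: (stable_perp_r (y := imp_ideal u v) (Tprime_perp_imp u ^~ v)).
exact: (costable_perp_l (x := filter_join u x) (Tprime_perp_join u x)).
Qed.

Lemma R111_canonicalE x z u :
  R111 (@cperp d L) (cT imp) u x z <-> Rle (@cperp d L) u x z.
Proof.
have joinE :
    R111 (@cperp d L) (cT imp) u x z <-> leX (@cperp d L) (filter_join z x) u.
  by split=> zxu v /Tprime_perp_join; apply: zxu.
by rewrite joinE /Rle !leX_canonicalE filter_join_subE and_comm.
Qed.

End CanonicalFrame.

Theorem proposition4p5 (d : Order.disp_t) (L : tbLatticeType d)
    (imp : L -> L -> L) (Himp : heyting_imp imp) :
  heyting_frame (@cperp d L) (@cT d L imp).
Proof.
split; first exact: canonical_implicative_frame.
exact: R111_canonicalE.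
Qed.
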